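(* Let $\mathfrak g$ be of type $A_n$, $b\in\mathcal B(\infty)$, $i\in I$, and let $m=m_i(b)$ and $m^\ast=m_i^\ast(b)$. Then for $1\le s\le i$, $\Sigma^\ast_s(\widetilde f_i(b))=\Sigma^\ast_s(b)+1$ if $m=1$ and $s=1$, and $\Sigma^\ast_s(\widetilde f_i(b))=\Sigma^\ast_s(b)$ otherwise; and for $1\le s\le n+1-i$, $\Sigma_s(\widetilde f_i^\ast(b))=\Sigma_s(b)+1$ if $m^\ast=1$ and $s=1$, and $\Sigma_s(\widetilde f_i^\ast(b))=\Sigma_s(b)$ otherwise.
   Context: $I=\{1,\dots,n\}$. $\mathcal I=\{(s,t)\in\mathbb Z_{>0}\times I:s+t\le n+1\}$; $\mathcal B(\infty)$ is the set of $b=(b_{s,t})_{(s,t)\in\mathcal I}\in\mathbb Z_{\ge0}^{\mathcal I}$ with $b_{1,k}\ge b_{2,k-1}\ge\dots\ge b_{k,1}$ for $1\le k\le n$. Convention: $b_{s,t}=0$, $\mathbf e_{s,t}=0$ for $(s,t)\notin\mathcal I$. $\partial_{s,t}(b)=b_{s,t}-b_{s,t+1}-b_{s+1,t-1}+b_{s+1,t}$, $\partial^\ast_{s,t}(b)=b_{s-1,t}-b_{s-1,t+1}-b_{s,t-1}+b_{s,t}$. For $1\le k\le n+1-i$: $\Sigma_k(b)=\sum_{s=k}^{n+1-i}\partial_{s,i}(b)$, $m_i(b)$ the smallest $k$ maximizing $\Sigma_k(b)$, $\widetilde f_i(b)=b+\mathbf e_{m_i(b),i}$. For $1\le k\le i$: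 $\Sigma^\ast_k(b)=\sum_{t=1}^k\partial^\ast_{t,i+1-t}(b)$, $m_i^\ast(b)$ the smallest $k$ maximizing $\Sigma^\ast_k(b)$, $\widetilde f_i^\ast(b)=b+\sum_{t=1}^{m_i^\ast(b)}(\mathbf e_{t,i+1-t}-\mathbf e_{t-1,i+1-t})$. *)

From mathcomp Require Import all_boot all_order all_algebra.
Set Implicit Arguments. Unset Strict Implicit. Unset Printing Implicit Defensive.
Import Order.TTheory GRing.Theory Num.Theory.
Local Open Scope ring_scope.

(* An element b of B(infinity) for type A_n is represented as a function
   b : nat -> nat -> int, b s t = b_{s,t}, which vanishes outside the index set
   \mathcal I (this realises the convention b_{s,t} = 0 for (s,t) \notin \mathcal I). *)
Definition inI (n s t : nat) : bool := [&& 0 < s, 0 < t, t <= n & s + t <= n.+1]%N.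

Definition inBinf (n : nat) (b : nat -> nat -> int) : Prop :=
  [/\ (forall s t, ~~ inI n s t -> b s t = 0),
      (forall s t, 0 <= b s t) &
      (forall s t, (0 < s)%N -> (1 < t)%N -> (s + t <= n.+1)%N ->
                   b s.+1 t.-1 <= b s t)].

Definition e_ (n s t : nat) : nat -> nat -> int :=
  fun s' t' => if inI n s t && (s' == s) && (t' == t) then 1 else 0.

Definition partial (b : nat -> nat -> int) (s t : nat) : int :=
  b s t - b s t.+1 - b s.+1 t.-1 + b s.+1 t.

Definition partialst (b : nat -> nat -> int) (s t : nat) : int :=
  b s.-1 t - b s.-1 t.+1 - b s t.-1 + b s t.

Definition Sigma (n i : nat) (b : nat -> nat -> int) (k : nat) : int :=
  \sum_(k <= s < (n.+1 - i).+1) partial b s i.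

Definition Sigmast (i : nat) (b : nat -> nat -> int) (k : nat) : int :=
  \sum_(1 <= t < k.+1) partialst b t (i.+1 - t).

(* smallest k in [lo, hi] (lo <= hi) maximizing F *)
Definition argmax_first (F : nat -> int) (lo hi : nat) : nat :=
  let ks := iota lo (hi.+1 - lo) in
  let M := foldr Num.max (F lo) (map F ks) in
  (lo + find (fun k => F k == M) ks)%N.

Definition m_i (n i : nat) (b : nat -> nat -> int) : nat :=
  argmax_first (Sigma n i b) 1 (n.+1 - i).

Definition mst_i (i : nat) (b : nat -> nat -> int) : nat :=
  argmax_first (Sigmast i b) 1 i.

Definition ftilde (n i : nat) (b : nat -> nat -> int) : nat -> nat -> int :=
  fun s t => b s t + e_ n (m_i n i b) i s t.

Definition ftildest (n i : nat) (b : nat -> nat -> int) : nat -> nat -> int :=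
  fun s t => b s t + \sum_(1 <= u < (mst_i i b).+1)
                       (e_ n u (i.+1 - u) s t - e_ n u.-1 (i.+1 - u) s t).

From mathcomp Require Import all_boot all_order all_algebra.
From mathcomp Require Import zify ring.
Import Order.TTheory GRing.Theory Num.Theory.
Local Open Scope ring_scope.

(* Both crystal operators only add boxes on the antidiagonals s + t = i, i + 1,
   where few of the ∂'s can see them.  The box e_{m,i} added by f_i enters
   Σ*_s only through ∂*_{1,i} (sign +) and ∂*_{2,i-1} (sign -), and only when
   m = 1; so Σ*_s changes by [m = 1]([s >= 1] - [s >= 2]) = [m = 1][s = 1].
   Dually, the u-th step e_{u,i+1-u} - e_{u-1,i+1-u} of f*_i changes ∂_{1,i}
   by [u = 1] - [u = 2] and no other ∂_{s,i}, so summing over 1 <= u <= m*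
   telescopes to [m* = 1]; here m* <= i matters, as for i = 1 the step u = 2
   would fall outside the index set.  No inequality defining B(∞) is used. *)

Lemma foldr_max_mem {d : Order.disp_t} {T : orderType d} (x0 : T) (s : seq T) :
  foldr Order.max x0 s \in x0 :: s.
Proof.
elim: s => [|a s IH] /=; first by rewrite mem_seq1.
rewrite !inE; case: (leP a (foldr Order.max x0 s)) => _; last by rewrite eqxx orbT.
by move: IH; rewrite inE => /orP[->|->]; rewrite ?orbT.
Qed.

Section ArgmaxFirst.
Variables (F : nat -> int) (lo hi : nat).

Lemma argmax_first_ge : (lo <= argmax_first F lo hi)%N.
Proof. exact: leq_addr. Qed.

Lemma argmax_first_le : (lo <= hi)%N -> (argmax_first F lo hi <= hi)%N.
Proof.
move=> le_lo_hi; rewrite /argmax_first.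
set ks := iota lo _; set M := foldr _ _ _.
have lo_ks : lo \in ks by rewrite mem_iota leqnn /=; lia.
have M_attained : has (fun k => F k == M) ks.
  have : M \in F lo :: map F ks by exact: foldr_max_mem.
  rewrite inE => /orP[/eqP->|/mapP[k k_ks ->]]; apply/hasP.
  - by exists lo.
  - by exists k.
have := M_attained; rewrite has_find size_iota; lia.
Qed.

End ArgmaxFirst.

Lemma mst_i_range i b : (1 <= i)%N -> (1 <= mst_i i b <= i)%N.
Proof. by move=> i_gt0; rewrite argmax_first_ge argmax_first_le. Qed.

Lemma sum_eq1_sub_eq2 {R : ringType} (N : nat) : (0 < N)%N ->
  \sum_(1 <= t < N.+1) ((t == 1%N)%:R - (t == 2%N)%:R : R) = (N == 1%N)%:R.
Proof.
elim: N => // N IH _; rewrite big_nat_recr //=.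
case: N IH => [|N] IH; first by rewrite big_geq // add0r subr0.
by rewrite IH //= !eqSS add0r subrr.
Qed.

Lemma sum_eq1 {R : ringType} (k N : nat) : (0 < k <= N)%N ->
  \sum_(k <= s < N.+1) ((s == 1%N)%:R : R) = (k == 1%N)%:R.
Proof.
move=> /andP[k_gt0 le_kN]; case: (eqVneq k 1%N) le_kN => [->|k_ne1] le_kN.
  rewrite big_ltn // big_nat_cond big1 ?addr0 // => s /andP[/andP[s_gt1 _] _].
  by rewrite gtn_eqF.
rewrite big_nat_cond big1 // => s /andP[/andP[le_ks _] _].
by rewrite gtn_eqF //; lia.
Qed.

Lemma SigmastD i (b d : nat -> nat -> int) k :
  Sigmast i (fun s t => b s t + d s t) k = Sigmast i b k + Sigmast i d k.
Proof. by rewrite /Sigmast -big_split; apply: eq_bigr => t _ /=; rewrite /partialst; ring. Qed.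

Lemma SigmaD n i (b d : nat -> nat -> int) k :
  Sigma n i (fun s t => b s t + d s t) k = Sigma n i b k + Sigma n i d k.
Proof. by rewrite /Sigma -big_split; apply: eq_bigr => s _ /=; rewrite /partial; ring. Qed.

Lemma Sigma_sum n i (r : seq nat) (G : nat -> nat -> nat -> int) k :
  Sigma n i (fun s t => \sum_(u <- r) G u s t) k = \sum_(u <- r) Sigma n i (G u) k.
Proof.
rewrite /Sigma exchange_big; apply: eq_bigr => s _.
by rewrite /partial big_split !sumrB.
Qed.

Ltac e_entry := rewrite /e_ /inI; do ?case: ifPn => ?; do ?case: eqP => ?; lia.

Lemma partialst_e n m i t : (1 <= i <= n)%N -> (1 <= t <= i)%N ->
  partialst (e_ n m i) t (i.+1 - t) = (m == 1%N)%:R * ((t == 1%N)%:R - (t == 2%N)%:R).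
Proof.
move=> i_range t_range; rewrite /partialst.
have -> : e_ n m i t.-1 (i.+1 - t) = 0 by e_entry.
have -> : e_ n m i t.-1 (i.+1 - t).+1 = ((m == 1%N) && (t == 2%N))%:R by e_entry.
have -> : e_ n m i t (i.+1 - t).-1 = 0 by e_entry.
have -> : e_ n m i t (i.+1 - t) = ((m == 1%N) && (t == 1%N))%:R by e_entry.
rewrite -!mulnb !natrM; ring.
Qed.

Definition estep n i u : nat -> nat -> int :=
  fun s t => e_ n u (i.+1 - u) s t - e_ n u.-1 (i.+1 - u) s t.

Lemma partial_estep n i u s : (1 <= i <= n)%N -> (1 <= u <= i)%N -> (0 < s)%N ->
  partial (estep n i u) s i = (s == 1%N)%:R * ((u == 1%N)%:R - (u == 2%N)%:R).
Proof.
move=> i_range u_range s_gt0; rewrite /partial.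
have -> : estep n i u s i = ((s == 1%N) && (u == 1%N))%:R by rewrite /estep; e_entry.
have -> : estep n i u s i.+1 = 0 by rewrite /estep; e_entry.
have -> : estep n i u s.+1 i.-1 = ((s == 1%N) && (u == 2%N))%:R by rewrite /estep; e_entry.
have -> : estep n i u s.+1 i = 0 by rewrite /estep; e_entry.
rewrite -!mulnb !natrM; ring.
Qed.

Lemma Sigmast_e n m i s : (1 <= i <= n)%N -> (1 <= s <= i)%N ->
  Sigmast i (e_ n m i) s = ((m == 1%N) && (s == 1%N))%:R.
Proof.
move=> i_range s_range; rewrite /Sigmast.
rewrite (eq_big_nat _ _ (F2 := fun t => (m == 1%N)%:R * ((t == 1%N)%:R - (t == 2%N)%:R))).
  by rewrite -mulr_sumr sum_eq1_sub_eq2 -?natrM ?mulnb //; case/andP: s_range.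
by move=> t t_range; apply: partialst_e; lia.
Qed.

Lemma Sigma_estep n i u k : (1 <= i <= n)%N -> (1 <= u <= i)%N -> (1 <= k <= n.+1 - i)%N ->
  Sigma n i (estep n i u) k = (k == 1%N)%:R * ((u == 1%N)%:R - (u == 2%N)%:R).
Proof.
move=> i_range u_range k_range; rewrite /Sigma.
rewrite (eq_big_nat _ _ (F2 := fun s => (s == 1%N)%:R * ((u == 1%N)%:R - (u == 2%N)%:R))).
  by rewrite -mulr_suml sum_eq1.
by move=> s s_range; apply: partial_estep; lia.
Qed.

Theorem lemma6p8 (n : nat) (b : nat -> nat -> int) (i : nat) :
  (1 <= n)%N -> (1 <= i <= n)%N -> inBinf n b ->
  (forall s, (1 <= s <= i)%N ->
     Sigmast i (ftilde n i b) s =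
     Sigmast i b s + (if (m_i n i b == 1%N) && (s == 1%N) then 1 else 0)) /\
  (forall s, (1 <= s <= n.+1 - i)%N ->
     Sigma n i (ftildest n i b) s =
     Sigma n i b s + (if (mst_i i b == 1%N) && (s == 1%N) then 1 else 0)).
Proof.
move=> _ i_range _; split=> s s_range.
  by rewrite /ftilde SigmastD Sigmast_e //; case: (_ && _).
have mst_range : (1 <= mst_i i b <= i)%N by apply: mst_i_range; lia.
rewrite /ftildest (SigmaD _ _ b (fun s t => \sum_(1 <= u < (mst_i i b).+1) estep n i u s t)).
rewrite Sigma_sum (eq_big_nat _ _ (F2 := fun u => (s == 1%N)%:R * ((u == 1%N)%:R - (u == 2%N)%:R))).
  rewrite -mulr_sumr sum_eq1_sub_eq2; last by case/andP: mst_range.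
  by rewrite -natrM mulnb andbC; case: (_ && _).
by move=> u u_range; apply: Sigma_estep; lia.
Qed.
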